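(* Let $S$ be a $d\times d$ symmetric positive semidefinite matrix and $L,U$ symmetric matrices with entries in $\mathbb{R}\cup\{\pm\infty\}$, $L_{ij}\le0\le U_{ij}$ for $i\ne j$ and $L_{ii}=U_{ii}=0$. Let $\widehat K$ be the optimal solution of minimizing $-\log\det K+\operatorname{tr}(SK)+\sum_{i\neq j}\max\{L_{ij}K_{ij},U_{ij}K_{ij}\}$ over positive definite $K$ (convention $\pm\infty\cdot0=0$). For $i\ne j$: if $L_{ij}\le-S_{ij}-\sqrt{S_{ii}S_{jj}}$ then $\widehat K_{ij}\ge0$; if $U_{ij}\ge-S_{ij}+\sqrt{S_{ii}S_{jj}}$ then $\widehat K_{ij}\le0$. In particular, $\widehat K_{ij}=0$ if both conditions hold. *)

From HB Require Import structures.
From mathcomp Require Import all_boot all_order all_algebra.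
From mathcomp Require Import all_classical all_reals.
From mathcomp Require Import ereal exp.
Set Implicit Arguments. Unset Strict Implicit. Unset Printing Implicit Defensive.
Import Order.TTheory GRing.Theory Num.Theory.
Local Open Scope ring_scope.

Definition psd_mx (R : realType) (d : nat) (S : 'M[R]_d) : Prop :=
  S^T = S /\ forall x : 'cV[R]_d, 0 <= (x^T *m S *m x) ord0 ord0.

Definition pd_mx (R : realType) (d : nat) (K : 'M[R]_d) : Prop :=
  K^T = K /\ forall x : 'cV[R]_d, x != 0 -> 0 < (x^T *m K *m x) ord0 ord0.

(* objective: -log det K + tr(S K) + sum_{i<>j} max(L_ij K_ij, U_ij K_ij),
   with the convention (+-oo) * 0 = 0 (MathComp's extended-real product). *)
Definition penalized_obj (R : realType) (d : nat) (S : 'M[R]_d)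
    (L U : 'M[\bar R]_d) (K : 'M[R]_d) : \bar R :=
  ((- ln (\det K) + \tr (S *m K))%:E +
   \sum_(i < d) \sum_(j < d | i != j)
      maxe (L i j * (K i j)%:E) (U i j * (K i j)%:E))%E.

From HB Require Import structures.
From mathcomp Require Import all_boot all_order all_algebra.
From mathcomp Require Import all_classical all_reals.
From mathcomp Require Import ereal exp.
From mathcomp Require Import ring lra.
Import Order.TTheory GRing.Theory Num.Theory.
Local Open Scope ring_scope.
Set Implicit Arguments. Unset Strict Implicit.

(* Suppose K^_ij < 0 although L_ij <= -S_ij - sqrt (S_ii S_jj). Move K^ along the
   direction t v v^T with v = sqrt S_jj e_i + sqrt S_ii e_j and t chosen so that
   the entry (i, j) becomes 0. The new matrix is still positive definite, -log det
   strictly decreases (matrix determinant lemma), tr (S K) grows by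
   t v^T S v = 2 |K^_ij| (S_ij + sqrt (S_ii S_jj)), the penalty loses
   2 max (L_ij K^_ij, U_ij K^_ij) >= 2 |K^_ij| (S_ij + sqrt (S_ii S_jj)), and no
   other off-diagonal entry moves: a strict improvement, contradicting optimality.
   For K^_ij > 0 take v = sqrt S_jj e_i - sqrt S_ii e_j instead. The same argument
   with v = e_k shows that optimality alone forces S_kk > 0. *)

Section RankOne.
Variable R : comNzRingType.

Lemma det_1D_mulmx n (u : 'cV[R]_n) (w : 'rV[R]_n) :
  \det (1%:M + u *m w) = 1 + (w *m u) ord0 ord0.
Proof.
(* Factor [[1, u], [-w, 1]] through both of its Schur complements. *)
have e1 : block_mx 1%:M u (- w) 1%:M =
   block_mx 1%:M 0 (- w) 1%:M *m block_mx 1%:M u 0 (1%:M + w *m u).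
  rewrite mulmx_block !mulmx1 !mul1mx ?mulmx0 ?mul0mx ?addr0 ?add0r.
  by rewrite mulNmx addrCA addNr addr0.
have e2 : block_mx 1%:M u (- w) 1%:M =
   block_mx (1%:M + u *m w) u 0 1%:M *m block_mx 1%:M 0 (- w) 1%:M.
  rewrite mulmx_block !mulmx1 !mul1mx ?mulmx0 ?mul0mx ?addr0 ?add0r.
  by rewrite mulmxN addrK.
have := congr1 determinant e1; rewrite e2 !det_mulmx ?det_lblock ?det_ublock.
rewrite !det1 !mul1r !mulr1 => ->.
by rewrite det_mx11 !mxE eqxx.
Qed.

Lemma mxtrace_mul_rank1 n (A : 'M[R]_n) (v : 'cV[R]_n) :
  \tr (A *m (v *m v^T)) = (v^T *m A *m v) ord0 ord0.
Proof. by rewrite mulmxA mxtrace_mulC /mxtrace big_ord1 mulmxA. Qed.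

Lemma quad_delta n (A : 'M[R]_n) a b :
  (delta_mx a ord0 : 'cV[R]_n)^T *m A *m delta_mx b ord0 = (A a b)%:M.
Proof.
apply/matrixP => x y; rewrite (ord1 x) (ord1 y) trmx_delta -rowE -colE !mxE.
by rewrite eqxx mulr1n.
Qed.

Lemma quad_pair n (A : 'M[R]_n) i j (al be : R) :
  let v : 'cV[R]_n := al *: delta_mx i ord0 + be *: delta_mx j ord0 in
  (v^T *m A *m v) ord0 ord0 =
  al ^+ 2 * A i i + al * be * (A i j + A j i) + be ^+ 2 * A j j.
Proof.
rewrite /= !linearD !linearZ /= !mulmxDl -!scalemxAl !quad_delta !mxE /= !mulr1n.
ring.
Qed.

End RankOne.

Section PositiveDefinite.
Variable R : realType.

Lemma cV_dot_ge0 n (x : 'cV[R]_n) : 0 <= (x^T *m x) ord0 ord0.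
Proof. by rewrite mxE sumr_ge0 // => k _; rewrite mxE -expr2 sqr_ge0. Qed.

Lemma cV_dot_gt0 n (x : 'cV[R]_n) : x != 0 -> 0 < (x^T *m x) ord0 ord0.
Proof.
move=> xn0; have [k xk] : exists k, x k ord0 != 0.
  apply/existsP; apply: contraR xn0; rewrite negb_exists => /forallP x0.
  by apply/eqP/matrixP => a b; rewrite (ord1 b) mxE; exact/eqP/negbNE/x0.
rewrite mxE (bigD1 k) //= mxE -expr2 ltr_pwDl ?exprn_even_gt0 //.
by rewrite sumr_ge0 // => l _; rewrite mxE -expr2 sqr_ge0.
Qed.

Lemma pd_mx1 n : pd_mx (1%:M : 'M[R]_n).
Proof. by split=> [|x /cV_dot_gt0]; rewrite ?trmx1 ?mulmx1. Qed.

Lemma pd_mx_convex n (A B : 'M[R]_n) s : pd_mx A -> pd_mx B -> 0 <= s <= 1 ->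
  pd_mx ((1 - s) *: A + s *: B).
Proof.
move=> [As Ap] [Bs Bp] /andP[s0 s1]; split; first by rewrite linearD !linearZ /= As Bs.
move=> x xn0; rewrite mulmxDr mulmxDl -!scalemxAr -!scalemxAl.
move: (Ap x xn0) (Bp x xn0); move: (x^T *m A *m x) (x^T *m B *m x) => qA qB.
rewrite !mxE; nra.
Qed.

Lemma pd_mxD_rank1 n (K : 'M[R]_n) (v : 'cV[R]_n) t : pd_mx K -> 0 <= t ->
  pd_mx (K + t *: (v *m v^T)).
Proof.
move=> [Ks Kp] t0; split; first by rewrite linearD linearZ /= trmx_mul trmxK Ks.
move=> x xn0; rewrite mulmxDr mulmxDl -scalemxAr -scalemxAl !mulmxA.
rewrite -[x^T *m v]trmxK trmx_mul trmxK -(mulmxA _ v^T).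
move: (Kp x xn0) (cV_dot_ge0 (v^T *m x)).
move: (x^T *m K *m x) ((v^T *m x)^T *m (v^T *m x)) => qK qv.
rewrite !mxE; nra.
Qed.

Lemma pd_det_neq0 n (K : 'M[R]_n) : pd_mx K -> \det K != 0.
Proof.
move=> [_ Kp]; apply/det0P => -[v vn0 vK].
by have := Kp v^T; rewrite trmx_eq0 trmxK vK mul0mx mxE ltxx => /(_ vn0).
Qed.

Lemma pd_det_gt0 n (K : 'M[R]_n) : pd_mx K -> 0 < \det K.
Proof.
move=> Kpd; pose M s : 'M[R]_n := (1 - s) *: 1%:M + s *: K.
pose p : {poly R} := \det (\matrix_(a, b) ((1 - 'X) * (a == b)%:R + 'X * (K a b)%:P)).
have pE s : p.[s] = \det (M s).
  rewrite -horner_evalE -det_map_mx; congr (\det _); apply/matrixP => a b.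
  rewrite !mxE rmorphD !rmorphM rmorphB rmorph1 /= !horner_evalE hornerX.
  by rewrite hornerMn !hornerC.
(* [p] does not vanish on [0, 1] since [M s] is positive definite there. *)
rewrite ltNge; apply/negP => detK_le0.
have [s /andP[s0 s1]] : exists2 s, 0 <= s <= 1 & root (- p) s.
  apply: poly_ivt; rewrite ?ler01 // !hornerN !pE /M subr0 subrr !scale1r !scale0r.
  by rewrite addr0 add0r det1 lerN10 oppr_ge0.
rewrite /root hornerN pE oppr_eq0; apply/negP/pd_det_neq0/pd_mx_convex => //.
  exact: pd_mx1.
by rewrite s0.
Qed.

Lemma pd_det_ltD_rank1 n (K : 'M[R]_n) (v : 'cV[R]_n) t :
  pd_mx K -> v != 0 -> 0 < t -> \det K < \det (K + t *: (v *m v^T)).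
Proof.
move=> Kpd vn0 t0; have [Ks Kp] := Kpd; have detK := pd_det_gt0 Kpd.
have Ku : K \in unitmx by rewrite unitmxE unitfE gt_eqF.
set y := invmx K *m v; have Ky : K *m y = v by rewrite mulmxA mulmxV // mul1mx.
have yn0 : y != 0 by apply: contraNneq vn0 => y0; rewrite -Ky y0 mulmx0.
have vy : 0 < (v^T *m y) ord0 ord0 by rewrite -{1}Ky trmx_mul Ks Kp.
have -> : K + t *: (v *m v^T) = K *m (1%:M + (t *: y) *m v^T).
  by rewrite mulmxDr mulmx1 mulmxA -scalemxAr Ky scalemxAl.
rewrite det_mulmx det_1D_mulmx -scalemxAr mxE ltr_pMr // ltrDl.
exact: mulr_gt0.
Qed.

End PositiveDefinite.

Section Penalty.
Variables (R : realType) (d : nat) (L U : 'M[\bar R]_d).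
Implicit Types (K : 'M[R]_d) (a b i j : 'I_d).

Definition pen_term K a b := maxe (L a b * (K a b)%:E)%E (U a b * (K a b)%:E)%E.

Definition penalty K := \sum_(a < d) \sum_(b < d | a != b) pen_term K a b.

Definition penalty_offpair K i j :=
  \sum_(p : 'I_d * 'I_d | [&& p.1 != p.2, p != (i, j) & p != (j, i)])
    pen_term K p.1 p.2.

Lemma penalized_objE S K :
  penalized_obj S L U K = ((- ln (\det K) + \tr (S *m K))%:E + penalty K)%E.
Proof. by []. Qed.

Lemma pen_term_geL K a b r : (L a b <= r%:E)%E -> K a b < 0 ->
  ((r * K a b)%:E <= pen_term K a b)%E.
Proof.
move=> Lr Kab; rewrite le_max EFinM leNgt.
by rewrite lte_nmul2r ?lte_fin // -leNgt Lr.
Qed.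

Lemma pen_term_geU K a b r : (r%:E <= U a b)%E -> 0 <= K a b ->
  ((r * K a b)%:E <= pen_term K a b)%E.
Proof.
move=> Ur Kab; rewrite le_max EFinM; apply/orP; right.
by apply: lee_wpmul2r; rewrite ?lee_fin.
Qed.

Lemma penalty1 : penalty 1%:M = 0%E.
Proof.
rewrite /penalty big1 // => a _; rewrite big1 // => b ab.
by rewrite /pen_term mxE (negbTE ab) !mule0 maxxx.
Qed.

Lemma eq_penalty K K' : (forall a b, a != b -> K a b = K' a b) ->
  penalty K = penalty K'.
Proof.
by move=> KK'; apply: eq_bigr => a _; apply: eq_bigr => b ab; rewrite /pen_term KK'.
Qed.

Lemma eq_penalty_offpair K K' i j :
  (forall a b, a != b -> (a, b) != (i, j) -> (a, b) != (j, i) -> K a b = K' a b) ->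
  penalty_offpair K i j = penalty_offpair K' i j.
Proof.
move=> KK'; apply: eq_bigr => -[a b] /and3P[ab abij abji].
by rewrite /pen_term KK'.
Qed.

Lemma penalty_pairE K i j : L^T = L -> U^T = U -> K^T = K -> i != j ->
  penalty K = (pen_term K i j + pen_term K i j + penalty_offpair K i j)%E.
Proof.
move=> Ls Us Ks ij; rewrite /penalty pair_big_dep /= (bigD1 (i, j)) ?ij //=.
rewrite (bigD1 (j, i)) /=; last by rewrite xpair_eqE [j == i]eq_sym (negbTE ij).
have -> : pen_term K j i = pen_term K i j.
  by rewrite /pen_term -[in LHS]Ls -[in LHS]Us -[in LHS]Ks !mxE.
by rewrite addeA; congr (_ + _)%E; apply: eq_bigl => p; rewrite -!andbA.
Qed.

Hypothesis LU_sign : forall a b, a != b -> (L a b <= 0)%E /\ (0 <= U a b)%E.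

Lemma pen_term_ge0 K a b : a != b -> (0 <= pen_term K a b)%E.
Proof.
move=> /LU_sign[La Ua]; rewrite le_max; apply/orP.
have [Kab|Kab] := leP 0 (K a b).
  by right; apply: mule_ge0; rewrite ?lee_fin.
by left; apply: mule_le0 => //; rewrite lee_fin ltW.
Qed.

Lemma penalty_ge0 K : (0 <= penalty K)%E.
Proof.
by rewrite /penalty sume_ge0 // => a _; rewrite sume_ge0 // => b; apply: pen_term_ge0.
Qed.

End Penalty.

Section Minimizer.
Variables (R : realType) (d : nat) (S : 'M[R]_d) (L U : 'M[\bar R]_d).
Variable Khat : 'M[R]_d.
Hypotheses (S_sym : S^T = S) (L_sym : L^T = L) (U_sym : U^T = U).
Hypothesis LU_sign : forall a b, a != b -> (L a b <= 0)%E /\ (0 <= U a b)%E.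
Hypothesis Khat_pd : pd_mx Khat.
Hypothesis Khat_min : forall K, pd_mx K ->
  (penalized_obj S L U Khat <= penalized_obj S L U K)%E.

Lemma penalty_minimizer_fin : penalty L U Khat \is a fin_num.
Proof.
have := Khat_min (pd_mx1 _ d); rewrite !penalized_objE penalty1 adde0.
by have := penalty_ge0 LU_sign Khat; case: (penalty L U Khat).
Qed.

Lemma minimizer_rank1_penalty_lt (v : 'cV[R]_d) t : v != 0 -> 0 < t ->
  let K := Khat + t *: (v *m v^T) in penalty L U K \is a fin_num ->
  (penalty L U Khat < (t * (v^T *m S *m v) ord0 ord0)%:E + penalty L U K)%E.
Proof.
move=> vn0 t0 K finK; have Kpd : pd_mx K := pd_mxD_rank1 v Khat_pd (ltW t0).
have := Khat_min Kpd; rewrite !penalized_objE.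
have ln_lt : ln (\det Khat) < ln (\det K).
  by rewrite ltr_ln ?posrE ?pd_det_gt0 ?pd_det_ltD_rank1.
have trK : \tr (S *m K) = \tr (S *m Khat) + t * (v^T *m S *m v) ord0 ord0.
  by rewrite mulmxDr mxtraceD -scalemxAr mxtraceZ mxtrace_mul_rank1.
rewrite trK -(fineK finK) -(fineK penalty_minimizer_fin) -!EFinD lee_fin lte_fin.
lra.
Qed.

Lemma minimizer_diag_gt0 k : 0 < S k k.
Proof.
pose e : 'cV[R]_d := delta_mx k ord0.
have en0 : e != 0 by apply/eqP => /matrixP/(_ k ord0)/eqP; rewrite !mxE !eqxx oner_eq0.
have -> : S k k = (e^T *m S *m e) ord0 ord0 by rewrite quad_delta mxE eqxx mulr1n.
have same : penalty L U (Khat + 1 *: (e *m e^T)) = penalty L U Khat.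
  apply: eq_penalty => a b ab; rewrite !mxE big_ord1 !mxE.
  rewrite !andbT; have [ak|ak] := eqVneq a k; last by rewrite mul0r mulr0 addr0.
  have bk : b != k by rewrite -ak eq_sym.
  by rewrite (negbTE bk) !mulr0 addr0.
have finK : penalty L U (Khat + 1 *: (e *m e^T)) \is a fin_num.
  by rewrite same penalty_minimizer_fin.
have := minimizer_rank1_penalty_lt en0 ltr01 finK; rewrite same mul1r.
by rewrite -(fineK penalty_minimizer_fin) -EFinD lte_fin ltrDr.
Qed.

Lemma minimizer_pair_update_lt i j (al be t : R) :
  i != j -> al != 0 -> 0 < t -> Khat i j + t * (al * be) = 0 ->
  (pen_term L U Khat i j + pen_term L U Khat i j <
   (t * (al ^+ 2 * S i i + al * be * (S i j + S j i) + be ^+ 2 * S j j))%:E)%E.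
Proof.
move=> ij al0 t0 Kij0; pose v : 'cV[R]_d := al *: delta_mx i ord0 + be *: delta_mx j ord0.
have vE a : v a ord0 = al * (a == i)%:R + be * (a == j)%:R by rewrite !mxE !eqxx !andbT.
have v0 a : a != i -> a != j -> v a ord0 = 0.
  by rewrite vE => /negbTE-> /negbTE->; rewrite !mulr0 addr0.
have vn0 : v != 0.
  apply/eqP => /matrixP/(_ i ord0)/eqP; rewrite vE mxE eqxx (negbTE ij).
  by rewrite mulr1 mulr0 addr0 (negbTE al0).
pose K := Khat + t *: (v *m v^T).
have Ksym : K^T = K := (pd_mxD_rank1 v Khat_pd (ltW t0)).1.
have KE a b : K a b = Khat a b + t * (v a ord0 * v b ord0) by rewrite !mxE big_ord1 !mxE.
have pen_ijK : pen_term L U K i j = 0%E.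
  rewrite /pen_term KE !vE !eqxx (negbTE ij) eq_sym (negbTE ij).
  by rewrite !mulr1 !mulr0 addr0 add0r Kij0 !mule0 maxxx.
have off : penalty_offpair L U K i j = penalty_offpair L U Khat i j.
  apply: eq_penalty_offpair => a b ab abij abji; rewrite KE.
  suff -> : v a ord0 * v b ord0 = 0 by rewrite mulr0 addr0.
  have [ai|ai] := eqVneq a i.
    have bi : b != i by rewrite -ai eq_sym.
    have bj : b != j by apply: contraNneq abij => ->; rewrite ai.
    by rewrite (v0 b bi bj) mulr0.
  have [aj|aj] := eqVneq a j; last by rewrite (v0 a ai aj) mul0r.
  have bj : b != j by rewrite -aj eq_sym.
  have bi : b != i by apply: contraNneq abji => ->; rewrite aj.
  by rewrite (v0 b bi bj) mulr0.
have offfin : penalty_offpair L U Khat i j \is a fin_num.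
  have := penalty_minimizer_fin; rewrite (penalty_pairE L_sym U_sym Khat_pd.1 ij).
  by rewrite fin_numD => /andP[].
have finK : penalty L U K \is a fin_num.
  by rewrite (penalty_pairE L_sym U_sym Ksym ij) pen_ijK off !add0e.
have := minimizer_rank1_penalty_lt vn0 t0 finK.
rewrite (penalty_pairE L_sym U_sym Ksym ij) (penalty_pairE L_sym U_sym Khat_pd.1 ij).
by rewrite pen_ijK off !add0e lteD2rE // quad_pair.
Qed.

Lemma minimizer_pen_term_lt i j (s : R) : i != j -> s ^+ 2 = 1 -> 0 < s * Khat i j ->
  (pen_term L U Khat i j < (s * Khat i j * (Num.sqrt (S i i * S j j) - s * S i j))%:E)%E.
Proof.
move=> ij s2 sK; have Sii := minimizer_diag_gt0 i; have Sjj := minimizer_diag_gt0 j.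
set p := Num.sqrt _; have p0 : 0 < p by rewrite sqrtr_gt0 mulr_gt0.
(* The update by [t v v^T], [v = al e_i + be e_j], kills the entry (i, j); the
   trace term then grows by exactly twice the claimed bound. *)
set al := Num.sqrt (S j j); set be := - s * Num.sqrt (S i i); set t := s * Khat i j / p.
have albe : al * be = - s * p.
  by rewrite /al /be mulrCA -sqrtrM ?ltW // [S j j * _]mulrC.
have Kij0 : Khat i j + t * (al * be) = 0.
  have -> : t * (al * be) = - (s ^+ 2 * Khat i j).
    by rewrite albe /t; field; rewrite gt_eqF.
  by rewrite s2 mul1r subrr.
have al0 : al != 0 by rewrite gt_eqF ?sqrtr_gt0.
have := minimizer_pair_update_lt ij al0 (divr_gt0 sK p0) Kij0.
have alS : al ^+ 2 = S j j by rewrite sqr_sqrtr ?ltW.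
have beS : be ^+ 2 = S i i by rewrite exprMn sqrrN s2 mul1r sqr_sqrtr ?ltW.
have pS : p ^+ 2 = S i i * S j j by rewrite sqr_sqrtr ?mulr_ge0 ?ltW.
have Sji : S j i = S i j by rewrite -[in LHS]S_sym mxE.
rewrite alS beS albe Sji [S j j * _]mulrC -pS.
set X := s * Khat i j * _.
have -> : t * (p ^+ 2 + - s * p * (S i j + S i j) + p ^+ 2) = X + X.
  by rewrite /t /X; field; rewrite gt_eqF.
by apply: contraTT; rewrite -!leNgt EFinD => ?; apply: leeD.
Qed.

Lemma minimizer_offdiag_ge0 i j : i != j ->
  (L i j <= (- S i j - Num.sqrt (S i i * S j j))%:E)%E -> 0 <= Khat i j.
Proof.
move=> ij Lij; rewrite leNgt; apply/negP => Kij; set p := Num.sqrt _ in Lij.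
have N1_2 : (-1 : R) ^+ 2 = 1 by rewrite sqrrN expr1n.
have N1K : 0 < -1 * Khat i j by rewrite mulN1r oppr_gt0.
have pen_lt := minimizer_pen_term_lt ij N1_2 N1K.
have := le_lt_trans (pen_term_geL U Lij Kij) pen_lt.
by rewrite lte_fin -/p (_ : -1 * _ * _ = (- S i j - p) * Khat i j) ?ltxx //; ring.
Qed.

Lemma minimizer_offdiag_le0 i j : i != j ->
  (U i j >= (- S i j + Num.sqrt (S i i * S j j))%:E)%E -> Khat i j <= 0.
Proof.
move=> ij Uij; rewrite leNgt; apply/negP => Kij; set p := Num.sqrt _ in Uij.
have K1 : 0 < 1 * Khat i j by rewrite mul1r.
have pen_lt := minimizer_pen_term_lt ij (expr1n _ 2) K1.
have := le_lt_trans (pen_term_geU L Uij (ltW Kij)) pen_lt.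
by rewrite lte_fin -/p (_ : 1 * _ * _ = (- S i j + p) * Khat i j) ?ltxx //; ring.
Qed.

End Minimizer.

Theorem corollary8p4 (R : realType) (d : nat) (S : 'M[R]_d)
    (L U : 'M[\bar R]_d) (Khat : 'M[R]_d) :
  psd_mx S ->
  L^T = L -> U^T = U ->
  (forall i j : 'I_d, i != j -> (L i j <= 0)%E /\ (0 <= U i j)%E) ->
  (forall i : 'I_d, L i i = 0%E /\ U i i = 0%E) ->
  pd_mx Khat ->
  (forall K : 'M[R]_d, pd_mx K ->
     (penalized_obj S L U Khat <= penalized_obj S L U K)%E) ->
  forall i j : 'I_d, i != j ->
    ((L i j <= (- S i j - Num.sqrt (S i i * S j j))%:E)%E -> 0 <= Khat i j) /\
    ((U i j >= (- S i j + Num.sqrt (S i i * S j j))%:E)%E -> Khat i j <= 0) /\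
    ((L i j <= (- S i j - Num.sqrt (S i i * S j j))%:E)%E ->
     (U i j >= (- S i j + Num.sqrt (S i i * S j j))%:E)%E -> Khat i j = 0).
Proof.
move=> [S_sym _] L_sym U_sym LU_sign _ Khat_pd Khat_min i j ij.
have Kge0 := minimizer_offdiag_ge0 S_sym L_sym U_sym LU_sign Khat_pd Khat_min ij.
have Kle0 := minimizer_offdiag_le0 S_sym L_sym U_sym LU_sign Khat_pd Khat_min ij.
split=> //; split=> // Lij Uij.
by apply/eqP; rewrite eq_le Kle0 ?Kge0.
Qed.
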